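(* Let $x_1,\dots,x_n\in\mathbb{R}^d$, $P_X=\frac1n\sum_i\delta_{x_i}$, and for $S\subseteq\{1,\dots,n\}$ with $|S|=s$ let $S_X=\frac1s\sum_{j\in S}\delta_{x_j}$. Fix $p\ge1$, a radius $\rho\ge0$, a tolerance $\epsilon>0$, and let $B=\{Q:W_p(Q,P_X)\le\rho\}$. Consider the following algorithm. Let $S^{(0)}$ minimize $W_p(P_X,S_X)$ over $|S|=s$, set $\mathcal{Q}^{(0)}=\emptyset$, $t=0$. Repeat: choose $Q^{(t+1)}\in\arg\max_{Q\in B}W_p(Q,S^{(t)}_X)$ and set $\mathrm{UB}^{(t+1)}=W_p(Q^{(t+1)},S^{(t)}_X)$; set $\mathcal{Q}^{(t+1)}=\mathcal{Q}^{(t)}\cup\{Q^{(t+1)}\}$; choose $S^{(t+1)}\in\arg\min_{|S|=s}\max_{Q\in\mathcal{Q}^{(t+1)}}W_p(Q,S_X)$ and set $\mathrm{LB}^{(t+1)}=\max_{Q\in\mathcal{Q}^{(t+1)}}W_p(Q,S^{(t+1)}_X)$; if $\mathrm{UB}^{(t+1)}-\mathrm{LB}^{(t+1)}<\epsilon$ stop and return $S^*=S^{(t+1)}$, otherwise increase $t$ by one. Then the returned solution $S^*$ is $\epsilon$-close to the minimizer of the distributionally robust site selection problem $\min_{|S|=s}\sup_{Q\in B}W_p(Q,S_X)$.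
   Context: $W_p$ is the $p$-Wasserstein distance between distributions on $\mathbb{R}^d$; $\delta_x$ is the Dirac mass at $x$. ''$\epsilon$-close to the minimizer'' is the paper's phrase; it is to be read as: the optimal value of the robust problem lies within the terminal bracket $[\mathrm{LB},\mathrm{UB}]$ of width less than $\epsilon$, so that $S^*$ is $\epsilon$-optimal. *)

From HB Require Import structures.
From mathcomp Require Import all_boot all_order all_algebra.
From mathcomp Require Import all_classical all_reals all_analysis.
Set Implicit Arguments. Unset Strict Implicit. Unset Printing Implicit Defensive.
Import Order.TTheory GRing.Theory Num.Theory.
Import numFieldNormedType.Exports.
Local Open Scope classical_set_scope.
Local Open Scope ring_scope.

(* R^d as row vectors, with its Borel sigma-algebra (generated by the open
   sets of the usual topology on 'rV[R]_d). *)
Definition Rd (R : realType) (d : nat) := g_sigma_algebraType (@open ('rV[R]_d : topologicalType)).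

Definition eucl (R : realType) (d : nat) (v : 'rV[R]_d) : R :=
  Num.sqrt (\sum_(i < d) v ord0 i ^+ 2).

Definition wcost (R : realType) (d : nat) (p : R) (z : Rd R d * Rd R d) : R :=
  powR (eucl (z.1 - z.2 : 'rV[R]_d)) p.

Definition couplings (R : realType) (d : nat) (mu nu : set (Rd R d) -> \bar R)
  : set (probability (Rd R d * Rd R d)%type R) :=
  [set pi | (forall A, measurable A -> pi (A `*` setT) = mu A) /\
            (forall B, measurable B -> pi (setT `*` B) = nu B)].

(* p-Wasserstein distance (infimum over couplings, +oo if none) *)
Definition Wp (R : realType) (d : nat) (p : R) (mu nu : set (Rd R d) -> \bar R)
  : \bar R :=
  poweR (ereal_inf [set (\int[pi]_z (wcost p z)%:E)%E | pi in couplings mu nu])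
        p^-1.

Definition emp (R : realType) (d n : nat) (x : 'I_n -> Rd R d) (S : {set 'I_n})
  : set (Rd R d) -> \bar R :=
  fun A => ((#|S|%:R)^-1%:E * \sum_(j in S) dirac (x j) A)%E.

Definition PX (R : realType) (d n : nat) (x : 'I_n -> Rd R d) :=
  emp x [set: 'I_n]%SET.

Definition wball (R : realType) (d n : nat) (p rho : R) (x : 'I_n -> Rd R d)
  : set (probability (Rd R d) R) :=
  [set Q | (Wp p (Q : set (Rd R d) -> \bar R) (PX x) <= rho%:E)%E].

Definition robust_obj (R : realType) (d n : nat) (p rho : R) (x : 'I_n -> Rd R d)
  (S : {set 'I_n}) : \bar R :=
  ereal_sup [set Wp p (Q : set (Rd R d) -> \bar R) (emp x S) | Q in wball p rho x].

Definition dro_value (R : realType) (d n : nat) (p rho : R) (x : 'I_n -> Rd R d)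
  (s : nat) : \bar R :=
  ereal_inf [set robust_obj p rho x S | S in [set S : {set 'I_n} | #|S| = s]].

Definition max_over (R : realType) (d n : nat) (p : R) (x : 'I_n -> Rd R d)
  (Qs : nat -> probability (Rd R d) R) (m : nat) (S : {set 'I_n}) : \bar R :=
  \big[maxe/-oo%E]_(1 <= k < m.+1) Wp p (Qs k : set (Rd R d) -> \bar R) (emp x S).

From HB Require Import structures.
From mathcomp Require Import all_boot all_order all_algebra.
From mathcomp Require Import all_classical all_reals all_analysis.
Set Implicit Arguments.
Unset Strict Implicit.
Unset Printing Implicit Defensive.
Import Order.TTheory GRing.Theory Num.Theory.
Import numFieldNormedType.Exports.
Local Open Scope classical_set_scope.
Local Open Scope ring_scope.

(** Every iterate brackets the robust optimum.  Since the distributions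
    Q^(1), ..., Q^(t) all lie in the ball B, the finite maximum defining
    LB^(t) never exceeds the supremum over B, so minimising both over |S| = s
    gives LB^(t) <= OPT.  Since Q^(t) attains the supremum over B for the
    feasible S^(t-1), UB^(t) is the robust objective of S^(t-1), hence
    OPT <= UB^(t). *)

Section ereal_extremum.
Context {R : realType} {T : Type}.
Implicit Types (f : T -> \bar R) (A : set T).

Lemma bigmax_le_ereal_sup (I : Type) (r : seq I) (P : pred I) (q : I -> T) f A :
  (forall i, P i -> A (q i)) ->
  (\big[maxe/-oo]_(i <- r | P i) f (q i) <= ereal_sup (f @` A))%E.
Proof.
move=> Aq; apply: bigmax_le => [|i Pi]; first exact: leNye.
by apply: ereal_sup_ubound; exists (q i); first exact: Aq.
Qed.

Lemma ereal_sup_image_argmax f A y0 :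
  A y0 -> (forall y, A y -> (f y <= f y0)%E) -> ereal_sup (f @` A) = f y0.
Proof.
move=> Ay0 y0_max; apply/le_anti/andP; split.
- by apply: ge_ereal_sup => _ [y Ay <-]; exact: y0_max.
- by apply: ereal_sup_ubound; exists y0.
Qed.

End ereal_extremum.

Section robust_site_selection.
Context {R : realType} {d n : nat} (p rho : R) (x : 'I_n -> Rd R d).

Local Notation W Q S := (Wp p (Q : set (Rd R d) -> \bar R) (emp x S)).

Lemma max_over_le_robust_obj (Qs : nat -> probability (Rd R d) R) m S :
  (forall k, (0 < k <= m)%N -> wball p rho x (Qs k)) ->
  (max_over p x Qs m S <= robust_obj p rho x S)%E.
Proof.
move=> QsB; rewrite /max_over /robust_obj big_nat_cond.
apply: (@bigmax_le_ereal_sup _ _ _ _ _ Qs (fun Q => W Q S)) => k /andP[k_range _].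
exact: QsB.
Qed.

Lemma max_over_argmin_le_dro_value (Qs : nat -> probability (Rd R d) R) m s S0 :
  (forall k, (0 < k <= m)%N -> wball p rho x (Qs k)) ->
  (forall S : {set 'I_n}, #|S| = s -> (max_over p x Qs m S0 <= max_over p x Qs m S)%E) ->
  (max_over p x Qs m S0 <= dro_value p rho x s)%E.
Proof.
move=> QsB S0_min; apply: le_ereal_inf_tmp => _ [S /= cardS <-].
exact: le_trans (S0_min S cardS) (max_over_le_robust_obj S QsB).
Qed.

Lemma robust_obj_argmax Q0 (S : {set 'I_n}) :
  wball p rho x Q0 -> (forall Q, wball p rho x Q -> (W Q S <= W Q0 S)%E) ->
  robust_obj p rho x S = W Q0 S.
Proof. exact: ereal_sup_image_argmax. Qed.

Lemma dro_value_le_argmax s Q0 (S : {set 'I_n}) :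
  #|S| = s -> wball p rho x Q0 ->
  (forall Q, wball p rho x Q -> (W Q S <= W Q0 S)%E) ->
  (dro_value p rho x s <= W Q0 S)%E.
Proof.
move=> cardS Q0B Q0_max; rewrite -(robust_obj_argmax Q0B Q0_max).
by apply: ereal_inf_lbound; exists S.
Qed.

End robust_site_selection.

Theorem proposition19 (R : realType) (d n s : nat) (x : 'I_n -> Rd R d)
  (p rho eps : R) (hp : 1 <= p) (hrho : 0 <= rho) (heps : 0 < eps)
  (hs0 : (0 < s)%N) (hsn : (s <= n)%N)
  (Sq : nat -> {set 'I_n}) (Qs : nat -> probability (Rd R d) R)
  (UB LB : nat -> \bar R) (T : nat)
  (* initialization: S^(0) minimizes W_p(P_X, S_X) over |S| = s *)
  (h0 : #|Sq 0%N| = s /\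
        forall S : {set 'I_n}, #|S| = s ->
          (Wp p (PX x) (emp x (Sq 0%N)) <= Wp p (PX x) (emp x S))%E)
  (* Q^(t+1) in argmax_{Q in B} W_p(Q, S^(t)_X) *)
  (hQ : forall t, (t < T)%N ->
        wball p rho x (Qs t.+1) /\
        forall Q, wball p rho x Q ->
          (Wp p (Q : set (Rd R d) -> \bar R) (emp x (Sq t))
           <= Wp p (Qs t.+1 : set (Rd R d) -> \bar R) (emp x (Sq t)))%E)
  (hUB : forall t, (t < T)%N ->
        UB t.+1 = Wp p (Qs t.+1 : set (Rd R d) -> \bar R) (emp x (Sq t)))
  (* S^(t+1) in argmin_{|S|=s} max_{Q in {Q^(1..t+1)}} W_p(Q, S_X) *)
  (hS : forall t, (t < T)%N ->
        #|Sq t.+1| = s /\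
        forall S : {set 'I_n}, #|S| = s ->
          (max_over p x Qs t.+1 (Sq t.+1) <= max_over p x Qs t.+1 S)%E)
  (hLB : forall t, (t < T)%N -> LB t.+1 = max_over p x Qs t.+1 (Sq t.+1))
  (* the algorithm did not stop before iteration T ... *)
  (hcont : forall t, (t.+1 < T)%N -> ~ (UB t.+1 - LB t.+1 < eps%:E)%E)
  (* ... and stops at iteration T, returning S^* = S^(T) *)
  (hT : (0 < T)%N) (hstop : (UB T - LB T < eps%:E)%E) :
  (LB T <= dro_value p rho x s)%E /\ (dro_value p rho x s <= UB T)%E /\
  (UB T - LB T < eps%:E)%E.
Proof.
have card_Sq t : (t < T)%N -> #|Sq t| = s.
  by case: t => [_|t /ltnW /hS[] //]; case: h0.
case: T hQ hUB hS hLB hcont card_Sq hT hstop => // t hQ hUB hS hLB _ card_Sq _ hstop.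
have tT : (t < t.+1)%N by [].
have [QB Q_max] := hQ t tT.
have QsB k : (0 < k <= t.+1)%N -> wball p rho x (Qs k).
  by case: k => // k /= k_lt; case: (hQ k k_lt).
split; last split=> //.
- by rewrite hLB //; apply: max_over_argmin_le_dro_value QsB (hS t tT).2.
- by rewrite hUB //; exact: dro_value_le_argmax (card_Sq t tT) QB Q_max.
Qed.
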